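(* Let $\alpha\in(0,1)$. (i) Let $m\ge 2$ be even and $A=\{a_1,\dots,a_m\}$. Let $\mathcal E$ be the election with two agents whose preferences are $$\sigma_1:\ a_1\succ\!\!\succ a_2\succ\!\!\succ\cdots\succ\!\!\succ a_{m/2+1}\succ a_{m/2+2}\succ\cdots\succ a_m,$$ $$\sigma_2:\ a_{m/2+1}\succ a_{m/2+2}\succ\cdots\succ a_m\succ a_1\succ\cdots\succ a_{m/2}.$$ Then $$\mathsf{dist}_\alpha(a_1,\mathcal E)=\frac{1+2\alpha^{m/2}-\alpha^m}{\alpha^m+1}.$$ (ii) If $m\ge 3$ is odd, there exists an election $\mathcal E'$ with $m$ alternatives, including an alternative $a_1$, such that $$\mathsf{dist}_\alpha(a_1,\mathcal E')=\frac{1+2\alpha^{(m-1)/2}-\alpha^{m-1}}{\alpha^{m-1}+1}.$$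
   Context: A preference $\sigma_i=(\pi_i,\Join_i)$ is a ranking $\pi_i:[m]\to A$ (a bijection, $\pi_i(1)$ most preferred) together with $\Join_i:[m-1]\to\{\succ,\succ\!\!\succ\}$. The displayed chains list $\pi_i(1),\pi_i(2),\dots$ with the symbol $\Join_i(j)$ between positions $j$ and $j+1$. A metric $d$ on agents and alternatives is nonnegative and symmetric, satisfies the triangle inequality, and has $d(x,x)=0$. The profile is $\alpha$-consistent with $d$ (mandatory elicitation) if for all $i$ and $j\in[m-1]$: - $\Join_i(j)=\,\succ$ implies $d(i,\pi_i(j+1))\ge d(i,\pi_i(j))>\alpha d(i,\pi_i(j+1))$; - $\Join_i(j)=\,\succ\!\!\succ$ implies $d(i,\pi_i(j))\le\alpha d(i,\pi_i(j+1))$. $\mathsf{dist}_\alpha(a,\mathcal E)=\sup_d\sum_i d(i,a)/\min_b\sum_i d(i,b)$, with the supremum over general metrics $d$ with which the profile is $\alpha$-consistent. *)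

From HB Require Import structures.
From mathcomp Require Import all_boot all_order all_algebra.
From mathcomp Require Import reals.
Set Implicit Arguments. Unset Strict Implicit. Unset Printing Implicit Defensive.
Import Order.TTheory GRing.Theory Num.Theory.
Local Open Scope ring_scope.

(* Alternatives are 'I_m; positions in a ranking are 0-indexed naturals
   j < m (paper position j+1).  strong j = true means the symbol between
   positions j and j+1 is "≻≻", false means "≻". *)
Record pref (m : nat) := Pref { rank : nat -> 'I_m; strong : nat -> bool }.

Definition valid_pref (m : nat) (p : pref m) : Prop :=
  (forall j1 j2, (j1 < m)%N -> (j2 < m)%N -> rank p j1 = rank p j2 -> j1 = j2) /\
  (forall a : 'I_m, exists2 j, (j < m)%N & rank p j = a).

Definition election (n m : nat) := 'I_n -> pref m.

Definition valid_election (n m : nat) (E : election n m) : Prop :=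
  forall i, valid_pref (E i).

(* points of the metric space: agents (inl) and alternatives (inr) *)
Definition point (n m : nat) := ('I_n + 'I_m)%type.

Definition is_metric (R : realType) (T : Type) (d : T -> T -> R) : Prop :=
  [/\ (forall x y, 0 <= d x y), (forall x y, d x y = d y x),
      (forall x y z, d x z <= d x y + d y z) & (forall x, d x x = 0)].

Definition consistent (R : realType) (n m : nat) (alpha : R)
  (E : election n m) (d : point n m -> point n m -> R) : Prop :=
  forall (i : 'I_n) (j : nat), (j.+1 < m)%N ->
    let x := d (inl i) (inr (rank (E i) j)) in
    let y := d (inl i) (inr (rank (E i) j.+1)) in
    if strong (E i) j then x <= alpha * y else (x <= y) && (alpha * y < x).

Definition SC (R : realType) (n m : nat) (d : point n m -> point n m -> R)
  (a : 'I_m) : R := \sum_(i < n) d (inl i) (inr a).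

Definition is_opt (R : realType) (n m : nat) (d : point n m -> point n m -> R)
  (v : R) : Prop :=
  (exists b, SC d b = v) /\ (forall b, v <= SC d b).

(* ratios SC(a)/min_b SC(b) over all metrics consistent with E
   (with a positive optimum, so that the ratio is defined) *)
Definition ratio_set (R : realType) (n m : nat) (alpha : R) (E : election n m)
  (a : 'I_m) (r : R) : Prop :=
  exists d : point n m -> point n m -> R,
    [/\ is_metric d, consistent alpha E d &
        exists v, [/\ is_opt d v, 0 < v & r = SC d a / v]].

Definition dist_is (R : realType) (n m : nat) (alpha : R) (E : election n m)
  (a : 'I_m) (D : R) : Prop :=
  (forall r, ratio_set alpha E a r -> r <= D) /\
  (forall u, (forall r, ratio_set alpha E a r -> r <= u) -> D <= u).

Definition ord_mod (m : nat) (Hm : (0 < m)%N) (j : nat) : 'I_m :=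
  Ordinal (ltn_pmod j Hm).

(* The two-agent election of part (i); alternative a_{t+1} is index t.
   sigma_1: a_1 ≻≻ ... ≻≻ a_{m/2+1} ≻ ... ≻ a_m
   sigma_2: a_{m/2+1} ≻ ... ≻ a_m ≻ a_1 ≻ ... ≻ a_{m/2} *)
Definition sigma1 (m : nat) (Hm : (0 < m)%N) : pref m :=
  Pref (ord_mod Hm) (fun j => (j < m./2)%N).
Definition sigma2 (m : nat) (Hm : (0 < m)%N) : pref m :=
  Pref (fun j => ord_mod Hm (j + m./2)) (fun _ => false).

Definition E_even (m : nat) (Hm : (0 < m)%N) : election 2 m :=
  fun i => if i == ord0 then sigma1 Hm else sigma2 Hm.

(* Let k = m/2 (for odd m, k = (m-1)/2 and a_m is ranked last by both agents),
   A = alpha^k, and write x_b, y_b for the distances of the two agents to b.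
   Upper bound: if b is not among a_{k+1}, ..., a_{2k}, both agents rank it
   below a_1, so SC(a_1) <= SC(b).  Otherwise the k strong steps of sigma_1
   give x_1 <= A x_b, the weak steps of sigma_2 give A y_1 <= y_b, and the
   triangle inequality along agent 2, b, agent 1, a_1 gives
   y_1 <= y_b + x_b + x_1; a positive combination of the three yields
   (1 + A^2) SC(a_1) <= (1 + 2A - A^2) SC(b).
   Lower bound: for alpha < beta < 1 put the agents on a line and hang the
   alternatives off it, so that distances shrink by alpha along the strong
   chain of sigma_1 and by beta along the top block of sigma_2.  This metric
   is consistent and its ratio 1 + 2A(1 - B)/(1 + AB), with B = beta^k, tends
   to the bound as beta decreases to alpha. *)

From HB Require Import structures.
From mathcomp Require Import all_boot all_order all_algebra.
From mathcomp Require Import reals.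
From mathcomp Require Import zify ring lra.
Set Implicit Arguments. Unset Strict Implicit. Unset Printing Implicit Defensive.
Import Order.TTheory GRing.Theory Num.Theory.
Local Open Scope ring_scope.

Section RealInequalities.
Variable R : realFieldType.

Lemma le0_of_le_mul_small (X C delta : R) : 0 <= C -> 0 < delta ->
  (forall e, 0 < e -> e < delta -> X <= C * e) -> X <= 0.
Proof.
move=> C_ge0 delta_gt0 small; rewrite leNgt; apply/negP => X_gt0.
have Cdelta_ge0 := mulr_ge0 C_ge0 (ltW delta_gt0).
have den_gt0 : 0 < 2 * X + C * delta by lra.
pose e := delta * X / (2 * X + C * delta).
have e_gt0 : 0 < e by rewrite divr_gt0 ?mulr_gt0.
have e_lt : e < delta by rewrite ltr_pdivrMr //; nra.
by have := small e e_gt0 e_lt; rewrite mulrA ler_pdivlMr //; nra.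
Qed.

Lemma subrXX_le_unit (a b : R) n : 0 <= a -> a <= b -> b <= 1 ->
  b ^+ n - a ^+ n <= (b - a) * n%:R.
Proof.
move=> a_ge0 ab b_le1; rewrite subrXX ler_wpM2l ?subr_ge0 //.
rewrite -[n in n%:R]card_ord -sumr_const; apply: ler_sum => i _.
have b_ge0 := le_trans a_ge0 ab.
by apply: mulr_ile1; rewrite ?exprn_ge0 ?exprn_ile1 ?(le_trans ab).
Qed.

Lemma le_expn_right_limit (a c X : R) n : 0 <= a -> a < 1 -> 0 <= c ->
  (forall b, a < b -> b < 1 -> X <= c * b ^+ n) -> X <= c * a ^+ n.
Proof.
move=> a_ge0 a_lt1 c_ge0 above; rewrite -subr_le0.
apply: (le0_of_le_mul_small (C := c * n%:R) (delta := 1 - a)).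
- by rewrite mulr_ge0.
- by rewrite subr_gt0.
move=> e e_gt0 e_lt; have [b_gt b_lt1] : a < a + e /\ a + e < 1 by split; lra.
have := ler_wpM2l c_ge0 (subrXX_le_unit n a_ge0 (ltW b_gt) (ltW b_lt1)).
have := above _ b_gt b_lt1.
rewrite addrAC subrr add0r mulrBr; lra.
Qed.

Lemma two_agent_bound_dominated (A x0 y0 xb yb : R) : 0 <= A -> A <= 1 ->
  x0 <= xb -> y0 <= yb -> 0 <= x0 + y0 ->
  (x0 + y0) * (1 + A ^+ 2) <= (1 + 2 * A - A ^+ 2) * (xb + yb).
Proof.
move=> A_ge0 A_le1 x_le y_le sum_ge0.
have sq_le : 1 + A ^+ 2 <= 1 + 2 * A - A ^+ 2 by rewrite expr2; nra.
apply: (le_trans (ler_wpM2l sum_ge0 sq_le)); rewrite mulrC ler_wpM2l //.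
  by rewrite expr2; nra.
lra.
Qed.

(* Weights 1 - A^2, 2 A and 2 on the last three hypotheses. *)
Lemma two_agent_bound_chains (A x0 y0 xb yb : R) : 0 <= A -> A <= 1 ->
  x0 <= A * xb -> A * y0 <= yb -> y0 <= yb + xb + x0 ->
  (x0 + y0) * (1 + A ^+ 2) <= (1 + 2 * A - A ^+ 2) * (xb + yb).
Proof.
move=> A_ge0 A_le1 x_le y_le tri.
have w1 : 0 <= 1 - A ^+ 2 by rewrite subr_ge0 exprn_ile1.
have w2 : 0 <= 2 * A by rewrite mulr_ge0.
have := ler_wpM2l w1 tri; have := ler_wpM2l w2 y_le.
rewrite expr2; nra.
Qed.

End RealInequalities.

Section LineWithHairs.
Variables (R : realType) (T : eqType) (h z : T -> R).
Hypothesis h_ge0 : forall p, 0 <= h p.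

Definition hair_dist (p q : T) : R :=
  if p == q then 0 else h p + h q + `|z p - z q|.

Lemma hair_dist_ge0 p q : 0 <= hair_dist p q.
Proof.
rewrite /hair_dist; case: eqP => // _.
by have := h_ge0 p; have := h_ge0 q; have := normr_ge0 (z p - z q); lra.
Qed.

Lemma hair_dist_metric : is_metric hair_dist.
Proof.
split=> [|p q|p q r|p]; [exact: hair_dist_ge0 | | | by rewrite /hair_dist eqxx].
  by rewrite /hair_dist eq_sym distrC [h q + _]addrC.
have [<- | pr] := eqVneq p r.
  by rewrite {1}/hair_dist eqxx addr_ge0 ?hair_dist_ge0.
rewrite /hair_dist (negbTE pr).
have [<- | pq] := eqVneq p q; first by rewrite (negbTE pr) add0r.
have [<- | qr] := eqVneq q r; first by rewrite addr0.
have := ler_distD (z q) (z p) (z r); have := h_ge0 q; lra.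
Qed.

End LineWithHairs.

Lemma metric_le3 (R : realType) (T : Type) (d : T -> T -> R) p q r s :
  is_metric d -> d p s <= d p q + d r q + d r s.
Proof.
case=> _ d_sym d_tri _; apply: le_trans (d_tri p q s) _.
by rewrite -addrA lerD2l (d_sym r q) d_tri.
Qed.

Lemma ratio_set_ge1 (R : realType) n m (alpha : R) (E : election n m) a r :
  ratio_set alpha E a r -> 1 <= r.
Proof. by case=> d [_ _ [v [[_ v_min] v_gt0 ->]]]; rewrite ler_pdivlMr ?mul1r ?v_min. Qed.

Definition rank_dist (R : realType) n m (E : election n m)
  (d : point n m -> point n m -> R) (i : 'I_n) (j : nat) : R :=
  d (inl i) (inr (rank (E i) j)).

Section ConsistentChains.
Variables (R : realType) (alpha : R) (n m : nat) (E : election n m).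
Variables (d : point n m -> point n m -> R) (i : 'I_n).
Hypotheses (alpha_ge0 : 0 <= alpha) (alpha_le1 : alpha <= 1).
Hypotheses (d_ge0 : forall p q, 0 <= d p q) (d_cons : consistent alpha E d).
Local Notation x := (rank_dist E d i).

Lemma rank_dist_step j : (j.+1 < m)%N ->
  [/\ x j <= x j.+1, strong (E i) j -> x j <= alpha * x j.+1
    & ~~ strong (E i) j -> alpha * x j.+1 <= x j].
Proof.
move/d_cons => /(_ i); rewrite -/(x j) -/(x j.+1).
have x_le : alpha * x j.+1 <= x j.+1 by rewrite ler_piMl ?d_ge0.
case: strong => [le | /andP[le /ltW lt]]; split=> //.
exact: le_trans x_le.
Qed.

Lemma rank_dist_mono j j' : (j <= j')%N -> (j' < m)%N -> x j <= x j'.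
Proof.
move=> /subnKC <-; elim: (j' - j)%N => [|l IH] lt; first by rewrite addn0.
have lt' : ((j + l).+1 < m)%N by rewrite -addnS.
have [step _ _] := rank_dist_step lt'.
by rewrite addnS; apply: le_trans (IH (ltnW lt')) step.
Qed.

Lemma rank_dist_strong_chain j j' : (j <= j')%N -> (j' < m)%N ->
  (forall t, (j <= t < j')%N -> strong (E i) t) -> x j <= alpha ^+ (j' - j) * x j'.
Proof.
move=> /subnKC <-; rewrite addKn; elim: (j' - j)%N => [|l IH] lt st.
  by rewrite addn0 mul1r.
have lt' : ((j + l).+1 < m)%N by rewrite -addnS.
have [_ step _] := rank_dist_step lt'.
have st' t : (j <= t < j + l)%N -> strong (E i) t by move=> jt; apply: st; lia.
apply: le_trans (IH (ltnW lt') st') _.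
rewrite addnS exprSr -mulrA ler_wpM2l ?exprn_ge0 // step //; apply: st; lia.
Qed.

Lemma rank_dist_weak_chain j j' : (j <= j')%N -> (j' < m)%N ->
  (forall t, (j <= t < j')%N -> ~~ strong (E i) t) -> alpha ^+ (j' - j) * x j' <= x j.
Proof.
move=> /subnKC <-; rewrite addKn; elim: (j' - j)%N => [|l IH] lt wk.
  by rewrite addn0 mul1r.
have lt' : ((j + l).+1 < m)%N by rewrite -addnS.
have [_ _ step] := rank_dist_step lt'.
have wk' t : (j <= t < j + l)%N -> ~~ strong (E i) t by move=> jt; apply: wk; lia.
apply: le_trans (IH (ltnW lt') wk').
rewrite addnS exprSr -mulrA ler_wpM2l ?exprn_ge0 // step //; apply: wk; lia.
Qed.

End ConsistentChains.

Lemma ord2_cases (i : 'I_2) : i = ord0 \/ i = ord_max.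
Proof. by case: i => [[|[|//]]] lt; [left | right]; apply: val_inj. Qed.

Lemma SC_two_agents (R : realType) m (d : point 2 m -> point 2 m -> R) b :
  SC d b = d (inl ord0) (inr b) + d (inl ord_max) (inr b).
Proof. by rewrite /SC big_ord_recr big_ord1; congr (d (inl _) _ + _); apply: val_inj. Qed.

Lemma modn_shift_half k j : (j < k.*2)%N ->
  ((j + k) %% k.*2 = if (j < k)%N then j + k else j - k)%N.
Proof.
move=> lt; case: ltnP => [jk | kj]; first by rewrite modn_small //; lia.
by rewrite -{1}(subnK kj) -addnA addnn modnDr modn_small //; lia.
Qed.

(* These hypotheses describe E_even (m = 2k) and E_odd (m = 2k + 1) at once. *)
Section TwoAgentElection.
Variables (k m : nat) (E : election 2 m).
Hypotheses (k_gt0 : (0 < k)%N) (km : (k.*2 <= m)%N).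
Hypothesis rank1E : forall j, (j < m)%N -> val (rank (E ord0) j) = j.
Hypothesis strong1E : forall j, (j < m)%N -> strong (E ord0) j = (j < k)%N.
Hypothesis rank2E : forall j, (j < m)%N ->
  val (rank (E ord_max) j) = if (j < k.*2)%N then ((j + k) %% k.*2)%N else j.
Hypothesis strong2E : forall j, (j < m)%N -> strong (E ord_max) j = false.

Local Notation a1 := (rank (E ord0) 0).

Definition pos2 (t : nat) : nat :=
  (if t < k then t + k else if t < k.*2 then t - k else t)%N.

Lemma rank2E_pos j : (j < m)%N -> val (rank (E ord_max) j) =
  (if j < k then j + k else if j < k.*2 then j - k else j)%N.
Proof.
move=> lt; rewrite rank2E //; case: ltnP => [jk2 | k2j].
  by rewrite modn_shift_half //; case: ltnP => //; lia.
by rewrite !ifF //; apply/negbTE; rewrite -leqNgt //; lia.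
Qed.

Lemma pos2_lt (a : 'I_m) : (pos2 a < m)%N.
Proof. by have := ltn_ord a; rewrite /pos2; case: ifP => ?; [|case: ifP => ?]; lia. Qed.

Lemma pos2_rank2 j : (j < m)%N -> pos2 (rank (E ord_max) j) = j.
Proof.
move=> lt; rewrite rank2E_pos // /pos2.
by case: (ltnP j k) => ?; [|case: (ltnP j k.*2) => ?]; repeat case: ifP => ?; lia.
Qed.

Lemma rank2_pos2 (a : 'I_m) : rank (E ord_max) (pos2 a) = a.
Proof.
apply: val_inj => /=; rewrite rank2E_pos ?pos2_lt // /pos2.
have := ltn_ord a.
by case: (ltnP a k) => ?; [|case: (ltnP a k.*2) => ?]; repeat case: ifP => ?; lia.
Qed.

Lemma k_lt_m : (k < m)%N.
Proof. lia. Qed.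

Lemma pos2_second_half (a : 'I_m) : (k <= a < k.*2)%N -> pos2 a = (a - k)%N.
Proof. by rewrite /pos2 => /andP[ka ak2]; rewrite ltnNge ka ak2. Qed.

Lemma pos2_ge_k (a : 'I_m) : ~~ (k <= a < k.*2)%N -> (k <= pos2 a)%N.
Proof. by rewrite /pos2; case: ifP => ?; [|case: ifP => ?]; lia. Qed.

Lemma rank1_val (a : 'I_m) : rank (E ord0) a = a.
Proof. by apply: val_inj; rewrite rank1E. Qed.

Lemma a1_val : rank (E ord0) 0 = 0%N :> nat.
Proof. by rewrite rank1E //; lia. Qed.

Lemma pos2_a1 : pos2 a1 = k.
Proof. by rewrite a1_val /pos2 k_gt0. Qed.

Lemma two_agent_valid : valid_election E.
Proof.
move=> i; case: (ord2_cases i) => ->; split.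
- by move=> j1 j2 lt1 lt2 /(congr1 val); rewrite !rank1E.
- by move=> a; exists a; rewrite ?rank1_val.
- by move=> j1 j2 lt1 lt2 eq; rewrite -(pos2_rank2 lt1) -(pos2_rank2 lt2) eq.
- by move=> a; exists (pos2 a); rewrite ?pos2_lt ?rank2_pos2.
Qed.

Variables (R : realType) (alpha : R).
Hypotheses (alpha_gt0 : 0 < alpha) (alpha_lt1 : alpha < 1).
Local Notation A := (alpha ^+ k).

Section UpperBound.
Variable d : point 2 m -> point 2 m -> R.
Hypotheses (d_metric : is_metric d) (d_cons : consistent alpha E d).
Local Notation x := (rank_dist E d ord0).
Local Notation y := (rank_dist E d ord_max).

Lemma d_ge0 p q : 0 <= d p q. Proof. by case: d_metric. Qed.

Lemma dist1E (a : 'I_m) : d (inl ord0) (inr a) = x a.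
Proof. by rewrite /rank_dist rank1_val. Qed.

Lemma dist2E (a : 'I_m) : d (inl ord_max) (inr a) = y (pos2 a).
Proof. by rewrite /rank_dist rank2_pos2. Qed.

Lemma SC_top1_le b :
  SC d a1 * (1 + A ^+ 2) <= (1 + 2 * A - A ^+ 2) * SC d b.
Proof.
have [a_ge0 a_le1] := (ltW alpha_gt0, ltW alpha_lt1).
have [A_ge0 A_le1] : 0 <= A /\ A <= 1 by rewrite exprn_ge0 ?exprn_ile1.
have mono i := rank_dist_mono i a_le1 d_ge0 d_cons.
have tri := metric_le3 (inl ord_max) (inr b) (inl ord0) (inr a1) d_metric.
have sum_ge0 : 0 <= x 0 + y k by rewrite addr_ge0 /rank_dist ?d_ge0.
rewrite !SC_two_agents !dist1E !dist2E pos2_a1 a1_val in tri *.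
have [second_half | elsewhere] := boolP (k <= b < k.*2)%N; last first.
  by apply: two_agent_bound_dominated => //; apply: mono; rewrite ?pos2_ge_k ?pos2_lt.
case/andP: (second_half) => kb bk2.
rewrite pos2_second_half // in tri *; apply: two_agent_bound_chains => //.
- have x0_le : x 0 <= A * x k.
    rewrite -[k in alpha ^+ k]subn0.
    apply: (rank_dist_strong_chain a_ge0 a_le1 d_ge0 d_cons) (leq0n k) k_lt_m _.
    by move=> t /andP[_ tk]; rewrite strong1E ?(ltn_trans tk k_lt_m).
  by apply: le_trans x0_le _; rewrite ler_wpM2l ?mono.
- have yk_le : alpha ^+ (k - (b - k)) * y k <= y (b - k).
    apply: (rank_dist_weak_chain a_ge0 a_le1 d_ge0 d_cons) _ k_lt_m _.
      by rewrite leq_subLR addnn ltnW.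
    by move=> t /andP[_ tk]; rewrite strong2E ?(ltn_trans tk k_lt_m).
  by apply: le_trans yk_le; rewrite ler_wpM2r ?d_ge0 // ler_wiXn2l // leq_subr.
Qed.

End UpperBound.

Section Witness.
Variable beta : R.
Hypotheses (alpha_lt_beta : alpha < beta) (beta_lt1 : beta < 1).
Local Notation B := (beta ^+ k).

(* The social cost of the alternative of index k, which is optimal: it solves
   L = 1 + (L + A) B (opt_cost_fix). *)
Definition opt_cost : R := (1 + A * B) / (1 - B).
Local Notation L := opt_cost.

(* Truncated subtraction makes both costs constant past the geometric chains. *)
Definition cost1 (j : nat) : R := alpha ^+ (k - j).
Definition cost2 (j : nat) : R :=
  if (j < k)%N then (L + A) * beta ^+ (k - j) else L + alpha ^+ (k.*2 - j).

Lemma beta_gt0 : 0 < beta. Proof. exact: lt_trans alpha_lt_beta. Qed.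
Lemma A_gt0 : 0 < A. Proof. by rewrite exprn_gt0. Qed.
Lemma A_le1 : A <= 1. Proof. by rewrite exprn_ile1 ?ltW. Qed.
Lemma B_lt1 : B < 1. Proof. by rewrite exprn_ilt1 ?(ltW beta_gt0) -?lt0n. Qed.

Lemma opt_costE : L * (1 - B) = 1 + A * B.
Proof. by rewrite divfK // subr_eq0 gt_eqF ?B_lt1. Qed.

Lemma opt_cost_ge1 : 1 <= L.
Proof.
have B_ge0 : 0 <= B by rewrite exprn_ge0 ?(ltW beta_gt0).
have := opt_costE; have := A_gt0; have := B_lt1; nra.
Qed.

Lemma opt_cost_fix : 1 + (L + A) * B = L.
Proof. by have := opt_costE; rewrite mulrDl; lra. Qed.

Lemma cost2_le_k j : (j <= k)%N -> cost2 j = (L + A) * beta ^+ (k - j).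
Proof.
rewrite /cost2 leq_eqVlt => /orP[/eqP -> | -> //].
by rewrite ltnn subnn -addnn addnK mulr1.
Qed.

Lemma cost2_ge_k j : (k <= j)%N -> cost2 j = L + alpha ^+ (k.*2 - j).
Proof. by rewrite /cost2 ltnNge => ->. Qed.

Lemma witness_costs (a : 'I_m) :
  [/\ cost2 (pos2 a) - cost1 a <= L, cost1 a - cost2 (pos2 a) <= L
     & L <= cost1 a + cost2 (pos2 a)].
Proof.
have [[L1 A0] A1] := (opt_cost_ge1, A_gt0, A_le1).
rewrite /cost1 /pos2; case: (ltnP a k) => [ak | ka].
  rewrite cost2_ge_k ?leq_addl // -addnn subnDr.
  by have := exprn_ge0 (k - a) (ltW alpha_gt0); split; lra.
have /eqP -> : (k - a == 0)%N by rewrite subn_eq0.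
case: (ltnP a k.*2) => [ak2 | k2a]; last first.
  rewrite cost2_ge_k //; have /eqP -> : (k.*2 - a == 0)%N by rewrite subn_eq0.
  by rewrite expr0; split; lra.
have [b0 b1] := (ltW beta_gt0, ltW beta_lt1).
have Bpow_ge : B <= beta ^+ (k - (a - k)) by rewrite ler_wiXn2l // leq_subr.
have Bpow_le1 : beta ^+ (k - (a - k)) <= 1 by rewrite exprn_ile1.
have Y_ge0 : 0 <= L + A by lra.
rewrite cost2_le_k; last by rewrite leq_subLR addnn ltnW.
have := ler_wpM2l Y_ge0 Bpow_ge; have := ler_wpM2l Y_ge0 Bpow_le1.
have := opt_cost_fix; rewrite mulr1; split; lra.
Qed.

(* Agent 1 sits at L and agent 2 at 0 on a line; alternative a hangs by a hair
   of length (x + y - L) / 2 from the point (L + y - x) / 2, where x = cost1 a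
   and y = cost2 (pos2 a), so that its distances to the agents are x and y. *)
Definition witness_hair (p : point 2 m) : R :=
  if p is inr a then (cost1 a + cost2 (pos2 a) - L) / 2 else 0.

Definition witness_foot (p : point 2 m) : R :=
  match p with
  | inl i => if i == ord0 then L else 0
  | inr a => (L + cost2 (pos2 a) - cost1 a) / 2
  end.

Definition witness_dist := hair_dist witness_hair witness_foot.

Lemma witness_dist_metric : is_metric witness_dist.
Proof.
apply: hair_dist_metric => -[//|a] /=.
by have [_ _ ?] := witness_costs a; rewrite divr_ge0 ?subr_ge0.
Qed.

Lemma witness_dist1E (a : 'I_m) : witness_dist (inl ord0) (inr a) = cost1 a.
Proof.
rewrite /witness_dist /hair_dist /= add0r.
have [le _ _] := witness_costs a.
by rewrite ger0_norm; [lra | rewrite subr_ge0 ler_pdivrMr //; lra].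
Qed.

Lemma witness_dist2E (a : 'I_m) : witness_dist (inl ord_max) (inr a) = cost2 (pos2 a).
Proof.
rewrite /witness_dist /hair_dist /= add0r sub0r normrN.
have [_ le _] := witness_costs a.
by rewrite ger0_norm; [lra | rewrite divr_ge0 //; lra].
Qed.

Lemma cost1_step j : if (j < k)%N then cost1 j <= alpha * cost1 j.+1
  else (cost1 j <= cost1 j.+1) && (alpha * cost1 j.+1 < cost1 j).
Proof.
rewrite /cost1; case: ltnP => [jk | kj].
  by rewrite -(subnSK jk) exprS.
have /eqP -> : (k - j == 0)%N by rewrite subn_eq0.
have /eqP -> : (k - j.+1 == 0)%N by rewrite subn_eq0 leqW.
by rewrite expr0 mulr1 lexx.
Qed.

Lemma cost2_step j : (cost2 j <= cost2 j.+1) && (alpha * cost2 j.+1 < cost2 j).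
Proof.
have [L1 A0] := (opt_cost_ge1, A_gt0).
case: (ltnP j k) => [jk | kj].
  rewrite !cost2_le_k ?(ltnW jk) // -(subnSK jk).
  have P_gt0 : 0 < (L + A) * beta ^+ (k - j.+1).
    by rewrite mulr_gt0 ?exprn_gt0 ?beta_gt0 //; lra.
  rewrite exprS mulrCA ler_piMl ?ltr_pM2r ?ltW //.
have [a0 a1] := (ltW alpha_gt0, ltW alpha_lt1).
have pow_le : alpha ^+ (k.*2 - j) <= alpha ^+ (k.*2 - j.+1).
  exact: ler_wiXn2l (leq_sub2l _ (leqnSn j)).
have pow_ge : alpha * alpha ^+ (k.*2 - j.+1) <= alpha ^+ (k.*2 - j).
  by rewrite -exprS ler_wiXn2l // subnS leqSpred.
rewrite !cost2_ge_k ?(leqW kj) //.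
have aL : alpha * L < L by rewrite gtr_pMl // (lt_le_trans ltr01 L1).
by apply/andP; split; rewrite ?mulrDr; lra.
Qed.

Lemma witness_dist_consistent : consistent alpha E witness_dist.
Proof.
move=> i j lt /=; have jm := ltnW lt.
case: (ord2_cases i) => ->.
  by rewrite strong1E // !witness_dist1E !rank1E //; exact: cost1_step.
by rewrite strong2E // !witness_dist2E !pos2_rank2 //; exact: cost2_step.
Qed.

Lemma witness_ratio : ratio_set alpha E a1 ((L + 2 * A) / L).
Proof.
have k_lt_k2 : (k < k.*2)%N by lia.
have SC_witness a : SC witness_dist a = cost1 a + cost2 (pos2 a).
  by rewrite SC_two_agents witness_dist1E witness_dist2E.
have [L1 A0] := (opt_cost_ge1, A_gt0).
exists witness_dist.
split; [exact: witness_dist_metric | exact: witness_dist_consistent |].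
exists L; split; [split | lra |].
- exists (Ordinal k_lt_m); rewrite SC_witness /cost1 /pos2 /= ltnn k_lt_k2 subnn.
  by rewrite cost2_le_k // subn0 expr0 opt_cost_fix.
- by move=> b; have [_ _] := witness_costs b; rewrite SC_witness.
rewrite SC_witness pos2_a1 a1_val /cost1 subn0.
by rewrite cost2_le_k // subnn expr0 mulr1; congr (_ / _); ring.
Qed.

Lemma ub_witness_ratio u : (forall r, ratio_set alpha E a1 r -> r <= u) ->
  1 + 2 * A - u <= (1 + u) * A * B.
Proof.
move/(_ _ witness_ratio); have [L1 B1] := (opt_cost_ge1, B_lt1).
rewrite ler_pdivrMr ?(lt_le_trans ltr01 L1) // => le.
have B1' : 0 <= 1 - B by rewrite subr_ge0 ltW.
have := ler_wpM2r B1' le; rewrite mulrDl -[u * L * _]mulrA opt_costE; lra.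
Qed.

End Witness.

Theorem two_agent_dist : dist_is alpha E a1 ((1 + 2 * A - A ^+ 2) / (A ^+ 2 + 1)).
Proof.
have A_ge0 : 0 <= A by rewrite exprn_ge0 ?ltW.
have den_gt0 : 0 < A ^+ 2 + 1 by have := exprn_ge0 2 A_ge0; lra.
split=> [r [d [d_metric d_cons [v [[[b <-] v_min] v_gt0 ->]]]]| u ub].
  rewrite ler_pdivrMr // mulrAC ler_pdivlMr // (addrC _ 1); exact: SC_top1_le.
have [mid_gt mid_lt1] := midf_lt alpha_lt1.
have ratio := witness_ratio mid_gt mid_lt1.
have u_ge1 := le_trans (ratio_set_ge1 ratio) (ub _ ratio).
have c_ge0 : 0 <= (1 + u) * A by rewrite mulr_ge0 //; lra.
have lim : 1 + 2 * A - u <= (1 + u) * A * A := le_expn_right_limit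
  (ltW alpha_gt0) alpha_lt1 c_ge0 (fun beta ab b1 => ub_witness_ratio ab b1 ub).
by rewrite ler_pdivrMr // expr2; lra.
Qed.

End TwoAgentElection.

Lemma E_even_dist (R : realType) (alpha : R) m (m_ge2 : (2 <= m)%N) :
  0 < alpha -> alpha < 1 -> ~~ odd m ->
  dist_is alpha (E_even (ltnW m_ge2)) (ord_mod (ltnW m_ge2) 0)
    ((1 + 2 * alpha ^+ m./2 - alpha ^+ m) / (alpha ^+ m + 1)).
Proof.
move=> alpha_gt0 alpha_lt1 m_even.
have m_eq : m = (m./2).*2 by rewrite -[LHS]odd_double_half (negbTE m_even).
have -> : alpha ^+ m = (alpha ^+ m./2) ^+ 2 by rewrite -exprM muln2 -m_eq.
apply: (two_agent_dist (k := m./2)) => //.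
- by move: m_ge2; rewrite {1}m_eq; lia.
- by rewrite -m_eq.
- by move=> j lt; rewrite /E_even eqxx /= modn_small.
- by move=> j lt; rewrite /E_even /= -m_eq lt.
Qed.

(* The election of part (i) on a_1, ..., a_{m-1}, with a_m appended at the
   bottom of both rankings. *)
Definition E_odd m (Hm : (0 < m)%N) : election 2 m := fun i =>
  if i == ord0 then sigma1 Hm
  else Pref (fun j => ord_mod Hm
               (if (j < (m./2).*2)%N then ((j + m./2) %% (m./2).*2)%N else j))
            (fun _ => false).

Section OddElection.
Variables (m : nat) (Hm : (0 < m)%N).
Hypotheses (m_ge3 : (3 <= m)%N) (m_odd : odd m).

Let m_eq : m = (m./2).*2.+1.
Proof. by rewrite -[LHS]odd_double_half m_odd add1n. Qed.

Let k_gt0 : (0 < m./2)%N. Proof. by move: m_ge3; rewrite {1}m_eq; lia. Qed.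
Let km : ((m./2).*2 <= m)%N. Proof. by rewrite [X in (_ <= X)%N]m_eq. Qed.

Let rank1E j : (j < m)%N -> val (rank (E_odd Hm ord0) j) = j.
Proof. by move=> lt; rewrite /E_odd eqxx /= modn_small. Qed.

Let rank2E j : (j < m)%N -> val (rank (E_odd Hm ord_max) j) =
  if (j < (m./2).*2)%N then ((j + m./2) %% (m./2).*2)%N else j.
Proof.
move=> lt; rewrite /E_odd /= modn_small //; case: ifP => // _.
by apply: leq_trans km; rewrite ltn_pmod // double_gt0.
Qed.

Lemma E_odd_valid : valid_election (E_odd Hm).
Proof. exact: two_agent_valid k_gt0 km rank1E rank2E. Qed.

Lemma E_odd_dist (R : realType) (alpha : R) : 0 < alpha -> alpha < 1 ->
  dist_is alpha (E_odd Hm) (ord_mod Hm 0)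
    ((1 + 2 * alpha ^+ (m.-1./2) - alpha ^+ m.-1) / (alpha ^+ m.-1 + 1)).
Proof.
move=> alpha_gt0 alpha_lt1.
have m_pred : m.-1 = (m./2).*2 by rewrite {1}m_eq.
rewrite m_pred doubleK -muln2 exprM.
by apply: (two_agent_dist k_gt0 km rank1E _ rank2E) => // j lt; rewrite /E_odd eqxx.
Qed.

End OddElection.

Theorem lemma7 (R : realType) (alpha : R) (Ha0 : 0 < alpha) (Ha1 : alpha < 1) :
  (forall (m : nat) (Hm2 : (2 <= m)%N), ~~ odd m ->
     dist_is alpha (E_even (ltnW Hm2)) (ord_mod (ltnW Hm2) 0)
       ((1 + 2 * alpha ^+ (m./2) - alpha ^+ m) / (alpha ^+ m + 1)))
  /\
  (forall m : nat, (3 <= m)%N -> odd m ->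
     exists (n : nat) (E : election n m) (a1 : 'I_m),
       valid_election E /\
       dist_is alpha E a1
         ((1 + 2 * alpha ^+ (m.-1./2) - alpha ^+ m.-1) / (alpha ^+ m.-1 + 1))).
Proof.
split=> [m m_ge2 | m m_ge3 m_odd]; first exact: E_even_dist.
have m_gt0 : (0 < m)%N by apply: leq_trans m_ge3.
exists 2%N, (E_odd m_gt0), (ord_mod m_gt0 0).
by split; [exact: E_odd_valid | exact: E_odd_dist].
Qed.
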